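(* Let $w=(w_{ij})$ be an $m\times n$ matrix of positive integers and $\varepsilon_1,\dots,\varepsilon_m\in\{1,-1\}$, and suppose $L_W(z)=\sum_{i=1}^m\varepsilon_i\prod_{j=1}^n\frac{z^{w_{ij}}+1}{z^{w_{ij}}-1}$ is constant in $z$. If $L_W(z)\neq 0$, then $n$ is even.
   Context: $W=\{w,s\}$ with $s=\{\varepsilon_1,\dots,\varepsilon_m\}$; $W$ is called $L$-rigid if $L_W(z)$ does not depend on $z$. *)

From HB Require Import structures.
From mathcomp Require Import all_boot all_order all_algebra all_field.
Set Implicit Arguments. Unset Strict Implicit. Unset Printing Implicit Defensive.
Import Order.TTheory GRing.Theory Num.Theory.
Local Open Scope ring_scope.

Definition LW (m n : nat) (w : 'M[nat]_(m, n)) (eps : 'I_m -> algC) (z : algC) : algC :=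
  \sum_(i < m) eps i * \prod_(j < n) ((z ^+ w i j + 1) / (z ^+ w i j - 1)).

From HB Require Import structures.
From mathcomp Require Import all_boot all_order all_algebra all_field.
From mathcomp Require Import ring.
Import Order.TTheory GRing.Theory Num.Theory.
Local Open Scope ring_scope.

(* Each factor (z^k + 1)/(z^k - 1) changes sign under z |-> 1/z, so
   L_W(1/z) = (-1)^n L_W(z).  Evaluating the constant c at z = 2 and z = 1/2
   gives c = (-1)^n c, which forces n to be even when c != 0. *)

Lemma cayley_termV (F : fieldType) (a : F) : a != 0 -> a != 1 ->
  (a^-1 + 1) / (a^-1 - 1) = - ((a + 1) / (a - 1)).
Proof.
move=> a0 a1.
have a1B : a - 1 != 0 by rewrite subr_eq0.
have aB1 : 1 - a != 0 by rewrite subr_eq0 eq_sym.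
have -> : a^-1 + 1 = (1 + a) / a by field.
have -> : a^-1 - 1 = (1 - a) / a by field.
by field; rewrite aB1 a1B a0.
Qed.

Lemma LWV (m n : nat) (w : 'M[nat]_(m, n)) (eps : 'I_m -> algC) (z : algC) :
  z != 0 -> (forall i j, z ^+ w i j != 1) ->
  LW w eps z^-1 = (-1) ^+ n * LW w eps z.
Proof.
move=> z0 zw1; rewrite /LW mulr_sumr; apply: eq_bigr => i _.
rewrite mulrCA -[n in (-1) ^+ n]card_ord -prodrN; congr (_ * _).
apply: eq_bigr => j _; rewrite exprVn.
by apply: cayley_termV; [exact: expf_neq0 | exact: zw1].
Qed.

Lemma expr_neq1 (R : numDomainType) (x : R) (k : nat) :
  1 < x -> (0 < k)%N -> x ^+ k != 1.
Proof. by move=> x_gt1 k_gt0; rewrite gt_eqF // exprn_egt1 // -lt0n. Qed.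

Lemma sign_fixed_even (R : numDomainType) (n : nat) (x : R) :
  x != 0 -> x = (-1) ^+ n * x -> ~~ odd n.
Proof.
move=> x0; rewrite -signr_odd; case: (odd n) => //=.
rewrite expr1 mulN1r => /eqP; rewrite -addr_eq0 -mulr2n.
by rewrite mulrn_eq0 (negPf x0).
Qed.

Theorem mainTheorem3 (m n : nat) (w : 'M[nat]_(m, n)) (eps : 'I_m -> algC)
  (hw : forall i j, (0 < w i j)%N)
  (heps : forall i, eps i = 1 \/ eps i = -1)
  (c : algC)
  (hconst : forall z : algC, (forall i j, z ^+ w i j != 1) -> LW w eps z = c)
  (hc : c != 0) :
  ~~ odd n.
Proof.
have two_gt1 : (1 : algC) < 2 by rewrite ltr1n.
have pow2_neq1 i j : (2 : algC) ^+ w i j != 1 by exact: expr_neq1.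
have L2 : LW w eps 2 = c := hconst 2 pow2_neq1.
have L2V : LW w eps 2^-1 = c.
  by apply: hconst => i j; rewrite exprVn invr_eq1.
have two_neq0 : (2 : algC) != 0 by rewrite pnatr_eq0.
apply: (sign_fixed_even _ _ _ hc).
by rewrite -{1}L2V (LWV _ _ _ _ _ two_neq0 pow2_neq1) L2.
Qed.
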